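(* Let $S$ be a finite set with $|S|=n$ and let $\mathfrak S$ be a collection of subsets of $S$ such that $|r\triangle s|\in\{0,4,6,8\}$ for all $r,s\in\mathfrak S$ (the subsets may have different cardinalities). Then $|\mathfrak S|\le\max_{m\ge0}\big(\mathcal A_{m,n}+\mathcal A_{m+2,n}+\mathcal A_{m+4,n}+\mathcal A_{m+6,n}+\mathcal A_{m+8,n}\big)$.
   Context: For $0\le m\le n$, $\mathcal A_{m,n}$ is the maximal cardinality of a collection of $m$-element subsets of an $n$-element set such that any two members $r,s$ satisfy $|r\triangle s|\in\{0,4,6,8\}$; one sets $\mathcal A_{m,n}=0$ unless $0\le m\le n$. $\triangle$ is symmetric difference. *)

From mathcomp Require Import all_boot.
Set Implicit Arguments. Unset Strict Implicit. Unset Printing Implicit Defensive.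

Definition symdiff (T : finType) (r s : {set T}) : {set T} := (r :\: s) :|: (s :\: r).

Definition sd_good (T : finType) (F : {set {set T}}) : bool :=
  [forall r in F, forall s in F, #|symdiff r s| \in [:: 0; 4; 6; 8]].

(* A_{m,n}: maximal size of a sd_good family of m-subsets of an n-element set
   (here the set 'I_n).  For m > n the only such family is empty, so A m n = 0. *)
Definition A (m n : nat) : nat :=
  \max_(F : {set {set 'I_n}} | [forall r in F, #|r| == m] && sd_good F) #|F|.

From mathcomp Require Import all_boot.
From mathcomp Require Import zify.

Set Implicit Arguments.
Unset Strict Implicit.
Unset Printing Implicit Defensive.

(* Let m be the least cardinality of a member of F.  For r, s in
   F we have |r| + |s \ r| = |s| + |r \ s| and |r △ s| = |r \ s| + |s \ r|,
   so |r| - |s| has the parity of |r △ s| and is at most |r △ s|; since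
   |r △ s| ∈ {0,4,6,8}, every member of F has cardinality m + j for some
   offset j ∈ {0,2,4,6,8}.  Hence F is the union of the five layers
   L_j = {r ∈ F : |r| = m + j}.  Each layer is a family of (m+j)-subsets of
   S satisfying the symmetric-difference condition; transporting it along a
   bijection S ≅ 'I_n (which preserves |r △ s|) shows |L_j| ≤ A_{m+j,n}.
   Summing over the five layers gives the bound with this m, and m ≤ n. *)

Definition size_offsets : seq nat := [:: 0; 2; 4; 6; 8].

Section SymmetricDifference.
Variable T : finType.
Implicit Types (r s : {set T}) (F G : {set {set T}}).

Lemma card_symdiff r s : #|symdiff r s| = #|r :\: s| + #|s :\: r|.
Proof.
rewrite /symdiff cardsU.
have -> : (r :\: s) :&: (s :\: r) = set0.
  by apply/setP=> x; rewrite !inE; case: (x \in r); case: (x \in s).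
by rewrite cards0 subn0.
Qed.

(* Both sides count |r ∪ s|: r and s share r ∩ s. *)
Lemma card_setD_balance r s : #|r| + #|s :\: r| = #|s| + #|r :\: s|.
Proof.
have Er := cardsID s r; have Es := cardsID r s.
rewrite setIC in Es; lia.
Qed.

Lemma sd_good_sub F G : G \subset F -> sd_good F -> sd_good G.
Proof.
move=> /subsetP GF /forall_inP HF; apply/forall_inP=> r rG.
apply/forall_inP=> s sG.
by move/forall_inP: (HF r (GF r rG)) => /(_ s (GF s sG)).
Qed.

Lemma sd_good_card_gap F r s : sd_good F -> r \in F -> s \in F ->
  #|s| <= #|r| -> #|r| - #|s| \in size_offsets.
Proof.
move=> /forall_inP /(_ r) HF rF sF le_sr.
move/forall_inP: (HF rF) => /(_ s sF).
rewrite card_symdiff !inE.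
have := card_setD_balance r s; lia.
Qed.

End SymmetricDifference.

Section InjectiveImage.
Variables (aT rT : finType) (f : aT -> rT).
Hypothesis f_inj : injective f.

Lemma imsetD_inj (r s : {set aT}) : f @: (r :\: s) = f @: r :\: f @: s.
Proof.
apply/setP=> y; apply/imsetP/setDP => [[x /setDP [xr xs] ->] | [/imsetP [x xr ->]]].
  by rewrite mem_imset // mem_imset.
by rewrite mem_imset // => xs; exists x; rewrite // inE xr xs.
Qed.

Lemma card_symdiff_imset (r s : {set aT}) :
  #|symdiff (f @: r) (f @: s)| = #|symdiff r s|.
Proof. by rewrite !card_symdiff -!imsetD_inj !card_imset. Qed.

Lemma sd_good_imset (F : {set {set aT}}) :
  sd_good F -> sd_good [set f @: r | r : {set aT} in F].
Proof.
move=> /forall_inP HF; apply/forall_inP=> _ /imsetP [r rF ->].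
apply/forall_inP=> _ /imsetP [s sF ->].
by rewrite card_symdiff_imset; move/forall_inP: (HF r rF); apply.
Qed.

End InjectiveImage.

(* A family of k-subsets of an n-element set satisfying the condition has at
   most A k n members: transport it to 'I_n along a bijection. *)
Lemma uniform_sd_good_le_A (T : finType) (n k : nat) (HT : #|T| = n)
    (G : {set {set T}}) :
  sd_good G -> {in G, forall r : {set T}, #|r| = k} -> #|G| <= A k n.
Proof.
move=> HG Gk.
pose f (x : T) : 'I_n := cast_ord HT (enum_rank x).
have f_inj : injective f by move=> x y /cast_ord_inj /enum_rank_inj.
have r_inj : injective (fun r : {set T} => f @: r) by apply: imset_inj.
rewrite -(card_imset G r_inj).
apply: (@leq_bigmax_cond _ _ (fun H : {set {set 'I_n}} => #|H|)).
rewrite sd_good_imset // andbT.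
by apply/forall_inP=> _ /imsetP [r rG ->]; rewrite card_imset // Gk.
Qed.

Lemma card_bigcup_seq_le (T : finType) (I : Type) (s : seq I)
    (B : I -> {set T}) :
  #|\bigcup_(i <- s) B i| <= \sum_(i <- s) #|B i|.
Proof.
elim: s => [|i s IHs]; first by rewrite !big_nil cards0.
rewrite !big_cons; apply: leq_trans (leq_card_setU _ _).1 _.
by rewrite leq_add2l.
Qed.

Lemma mem_bigcup_seq (T : finType) (I : eqType) (s : seq I)
    (B : I -> {set T}) (i : I) (x : T) :
  i \in s -> x \in B i -> x \in \bigcup_(j <- s) B j.
Proof.
elim: s => // j s IHs; rewrite in_cons big_cons inE.
by case/orP=> [/eqP <- -> // | /IHs xB /xB ->]; rewrite orbT.
Qed.

Theorem lemma4p3 (S : finType) (n : nat) (HS : #|S| = n)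
  (F : {set {set S}}) (HF : sd_good F) :
  #|F| <= \max_(m < n.+1) (A m n + A (m + 2) n + A (m + 4) n + A (m + 6) n + A (m + 8) n).
Proof.
have [->|[r1 r1F]] := set_0Vmem F; first by rewrite cards0.
have ex_size : exists k, [exists r in F, #|r| == k].
  by exists #|r1|; apply/exists_inP; exists r1.
case: (ex_minnP ex_size) => m /exists_inP [r0 r0F /eqP r0m] m_min.
have m_le_n : m < n.+1 by rewrite ltnS -r0m -HS max_card.
pose layer j := [set r in F | #|r| == m + j].
have F_layers : F \subset \bigcup_(j <- size_offsets) layer j.
  apply/subsetP=> r rF.
  have le_mr : m <= #|r| by apply: m_min; apply/exists_inP; exists r.
  apply: (@mem_bigcup_seq _ _ _ _ (#|r| - m)).
    by rewrite -r0m (sd_good_card_gap HF) // r0m.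
  by rewrite /layer inE rF subnKC ?eqxx.
have layer_le_A j : #|layer j| <= A (m + j) n.
  apply: uniform_sd_good_le_A HS _ _ _.
    by apply: sd_good_sub HF; apply/subsetP=> r; rewrite inE => /andP [].
  by move=> r; rewrite inE => /andP [_ /eqP].
apply: leq_trans (leq_bigmax_cond (Ordinal m_le_n) isT); rewrite /=.
apply: leq_trans (subset_leq_card F_layers) _.
apply: leq_trans (card_bigcup_seq_le _ _) _.
rewrite /size_offsets !big_cons big_nil addn0 !addnA.
by rewrite !leq_add // -{1}[m]addn0 layer_le_A.
Qed.
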